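(* There are absolute constants $k$ and $C$ such that the following holds. Let $G$ be a finite semisimple group, and let $H$ be a finite group having a nontrivial Abelian normal subgroup. Then the count-free $(k, C)$-WL Version I algorithm distinguishes $G$ from $H$.
   Context: A finite group is semisimple if it has no nontrivial Abelian normal subgroup. Count-free pebble game Version I on finite groups $G,H$ with $m$ pebble pairs: if $|G|\ne|H|$ Spoiler wins at once; each round Spoiler picks up a pebble pair, the winning condition is checked, Spoiler places one pebble of the pair on an element of either group and Duplicator places its partner on an element of the other group. Spoiler wins when, for the pebbled elements $g_1,\ldots,g_\ell\in G$ and corresponding $h_1,\ldots,h_\ell\in H$, it is not the case that for all $i,j,t$: $g_i=g_j\iff h_i=h_j$ and $g_ig_j=g_t\iff h_ih_j=h_t$. The count-free $(k,r)$-WL Version I distinguishes $G$ and $H$ if Spoiler has a strategy to win this game with $k+1$ pebble pairs within $r$ rounds (equivalently, the count-free $k$-dimensional WL Version I refinement yields different color sets after $r$ rounds). *)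

From mathcomp Require Import all_boot all_fingroup.
Set Implicit Arguments. Unset Strict Implicit. Unset Printing Implicit Defensive.
Local Open Scope group_scope.

(* A finite group is modelled as a finGroupType gT, the group being [set: gT]. *)

Definition semisimple (gT : finGroupType) : Prop :=
  forall N : {group gT}, N <| [set: gT] -> abelian N -> N = 1 :> {set gT}.

(* A pebble configuration with m pebble pairs: pair i is either off the
   board (None) or placed on (g_i, h_i). *)
Definition config (gT hT : finGroupType) (m : nat) := 'I_m -> option (gT * hT).

Definition empty_config (gT hT : finGroupType) (m : nat) : config gT hT m :=
  fun _ => None.

Definition place (gT hT : finGroupType) (m : nat) (c : config gT hT m)
  (i : 'I_m) (p : gT * hT) : config gT hT m :=
  fun j => if j == i then Some p else c j.

Definition pebble_iso (gT hT : finGroupType) (m : nat) (c : config gT hT m) : Prop :=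
  forall (i j t : 'I_m) (gi gj gt : gT) (hi hj ht : hT),
    c i = Some (gi, hi) -> c j = Some (gj, hj) -> c t = Some (gt, ht) ->
    (gi = gj <-> hi = hj) /\ (gi * gj = gt <-> hi * hj = ht).

Fixpoint spoiler_wins (gT hT : finGroupType) (m : nat) (r : nat)
  (c : config gT hT m) : Prop :=
  ~ pebble_iso c \/
  match r with
  | 0 => False
  | r'.+1 =>
      exists i : 'I_m,
        (exists g : gT, forall h : hT, spoiler_wins r' (place c i (g, h))) \/
        (exists h : hT, forall g : gT, spoiler_wins r' (place c i (g, h)))
  end.

Definition wl1_distinguishes (k r : nat) (gT hT : finGroupType) : Prop :=
  #|gT| <> #|hT| \/ @spoiler_wins gT hT k.+1 r (@empty_config gT hT k.+1).

From mathcomp Require Import all_boot all_fingroup.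
Set Implicit Arguments. Unset Strict Implicit. Unset Printing Implicit Defensive.
Local Open Scope group_scope.

(* Spoiler pebbles a nontrivial x in an Abelian normal subgroup N of H, and
   Duplicator must answer with some g <> 1 in G.  As G is semisimple, the
   normal closure of g is not Abelian, so some conjugate g^y does not commute
   with g.  Spoiler pebbles y, gy, g^y and g g^y.  The relations g y = gy and
   y g^y = gy force Duplicator's answer to g^y to be the conjugate x^y' of x,
   which lies in N and hence commutes with x, while g^y g <> g g^y.  This
   uses five pebble pairs and five rounds. *)

Lemma class_gen_normal (gT : finGroupType) (G : {group gT}) (g : gT) :
  g \in G -> <<g ^: G>> <| G.
Proof. by move=> Gg; rewrite /normal gen_subG class_subG // norms_gen ?class_norm. Qed.

Lemma class_gen_abelian (gT : finGroupType) (G : {group gT}) (g : gT) :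
  {in G, forall y, commute g (g ^ y)} -> abelian <<g ^: G>>.
Proof.
move=> cgJ; rewrite abelian_gen.
apply/centsP=> _ /imsetP[u Gu ->] _ /imsetP[v Gv ->].
have -> : g ^ v = (g ^ (v * u^-1)) ^ u by rewrite -conjgM mulgKV.
by rewrite /commute -!conjMg cgJ // groupM ?groupV.
Qed.

Lemma semisimple_conj_noncommute (gT : finGroupType) (g : gT) :
  semisimple gT -> g != 1 -> exists y, ~ commute g (g ^ y).
Proof.
move=> ssG ntg.
have [y /eqP ncomm | comm] := pickP (fun y => g * g ^ y != g ^ y * g).
  by exists y.
have abJ : abelian <<g ^: [set: gT]>>.
  by apply: class_gen_abelian => y _; apply/eqP/negbFE/comm.
have gJ1 := ssG _ (class_gen_normal (in_setT g)) abJ.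
have : g \in <<g ^: [set: gT]>> by rewrite mem_gen ?class_refl.
by rewrite gJ1 inE (negbTE ntg).
Qed.

Lemma abelian_normal_commuteJ (gT : finGroupType) (G N : {group gT}) x y :
  N <| G -> abelian N -> x \in N -> y \in G -> commute x (x ^ y).
Proof.
move=> nNG aN Nx Gy; apply: (centsP aN) => //.
by rewrite memJ_norm // (subsetP (normal_norm nNG)).
Qed.

Section PebbleGame.

Variables (gT hT : finGroupType) (m : nat).
Implicit Types (c : config gT hT m) (r : nat).

Lemma spoiler_wins_now r c : ~ pebble_iso c -> spoiler_wins r c.
Proof. by case: r => [|r] /=; left. Qed.

Lemma spoiler_pebbleG r c i (g : gT) :
  (forall h, spoiler_wins r (place c i (g, h))) -> spoiler_wins r.+1 c.
Proof. by move=> win; right; exists i; left; exists g. Qed.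

Lemma spoiler_pebbleH r c i (h : hT) :
  (forall g, spoiler_wins r (place c i (g, h))) -> spoiler_wins r.+1 c.
Proof. by move=> win; right; exists i; right; exists h. Qed.

Lemma pebble_iso_mul c i j t gi gj gt hi hj ht :
  pebble_iso c -> c i = Some (gi, hi) -> c j = Some (gj, hj) ->
  c t = Some (gt, ht) -> gi * gj = gt <-> hi * hj = ht.
Proof. by move=> iso ci cj ct; have [_] := iso _ _ _ _ _ _ _ _ _ ci cj ct. Qed.

Lemma pebble_iso_eq1 c i g h :
  pebble_iso c -> c i = Some (g, h) -> g = 1 <-> h = 1.
Proof.
move=> iso ci; have [gg hh] := pebble_iso_mul iso ci ci ci.
have idem1 (T : finGroupType) (a : T) : a * a = a -> a = 1.
  by move=> aa; apply: (mulgI a); rewrite aa mulg1.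
by split=> [g1 | h1]; apply: idem1; [apply: gg | apply: hh]; rewrite ?g1 ?h1 mulg1.
Qed.

Lemma pebble_iso_conj_commute c i0 i1 i2 i3 i4 g y x y' w' z' v' :
  pebble_iso c -> c i0 = Some (g, x) -> c i1 = Some (y, y') ->
  c i2 = Some (g * y, w') -> c i3 = Some (g ^ y, z') ->
  c i4 = Some (g * g ^ y, v') -> commute x (x ^ y') -> commute g (g ^ y).
Proof.
move=> iso c0 c1 c2 c3 c4 cxJ.
have e1 : x * y' = w' by apply/(pebble_iso_mul iso c0 c1 c2).
have e2 : y' * z' = w' by apply/(pebble_iso_mul iso c1 c3 c2); rewrite -conjgC.
have e3 : x * z' = v' by apply/(pebble_iso_mul iso c0 c3 c4).
have zJ : z' = x ^ y' by apply: (mulgI y'); rewrite e2 -e1 (conjgC x).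
by apply/esym/(pebble_iso_mul iso c3 c0 c4); rewrite -e3 zJ cxJ.
Qed.

End PebbleGame.

Arguments spoiler_pebbleG {gT hT m r c} i g.
Arguments spoiler_pebbleH {gT hT m r c} i h.
Arguments pebble_iso_conj_commute {gT hT m c} i0 i1 i2 i3 i4 {g y x y' w' z' v'}.

Theorem lemma6p6 :
  exists k C : nat,
    forall (gT hT : finGroupType),
      semisimple gT ->
      (exists N : {group hT},
          [&& N <| [set: hT], abelian N & N != 1%G]) ->
      wl1_distinguishes k C gT hT.
Proof.
exists 4, 5 => gT hT ssG [N /and3P[nN aN ntN]].
have [x Nx ntx] := trivgPn _ ntN.
pose i0 := @Ordinal 5 0 isT; pose i1 := @Ordinal 5 1 isT.
pose i2 := @Ordinal 5 2 isT; pose i3 := @Ordinal 5 3 isT.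
pose i4 := @Ordinal 5 4 isT.
right; apply: (spoiler_pebbleH i0 x) => g.
have [-> | ntg] := eqVneq g 1.
  apply: spoiler_wins_now => iso; move/eqP: ntx; apply.
  exact: (pebble_iso_eq1 (i := i0) iso erefl).1.
have [y ncomm] := semisimple_conj_noncommute ssG ntg.
apply: (spoiler_pebbleG i1 y) => y'.
apply: (spoiler_pebbleG i2 (g * y)) => w'.
apply: (spoiler_pebbleG i3 (g ^ y)) => z'.
apply: (spoiler_pebbleG i4 (g * g ^ y)) => v'.
apply: spoiler_wins_now => iso; apply: ncomm.
apply: (pebble_iso_conj_commute i0 i1 i2 i3 i4 iso) => //.
exact: abelian_normal_commuteJ nN aN Nx (in_setT y').
Qed.
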